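(* Let $(S_n)_{n\in\mathbb{N}}$ be a simple random walk on $\mathbb{Z}$ with constant transition probability $p\equiv\overline{p}\in(0,1)$, $\overline{p}\neq\frac12$ (i.e. i.i.d. steps equal to $+1$ with probability $\overline{p}$ and $-1$ with probability $1-\overline{p}$). Then there exists a bounded function $f:\mathbb{Z}\to\mathbb{R}$ such that the sequence $\ell_n(f)=\frac1n\sum_{j=1}^n f(S_j)$, $n\in\mathbb{N}$, does not satisfy a large deviation principle.
   Context: A sequence of real random variables $(X_n)$ satisfies a large deviation principle if there is a lower semicontinuous $J:\mathbb{R}\to[0,\infty]$ with $-\inf_U J\le\liminf_n\frac1n\log\mathbb{P}(X_n\in U)$ for all open $U$ and $\limsup_n\frac1n\log\mathbb{P}(X_n\in F)\le-\inf_F J$ for all closed $F$. The walk starts at $S_1=0$. *)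

From HB Require Import structures.
From mathcomp Require Import all_boot all_order all_algebra.
From mathcomp Require Import all_classical all_reals all_analysis.
Set Implicit Arguments. Unset Strict Implicit. Unset Printing Implicit Defensive.
Import Order.TTheory GRing.Theory Num.Theory.
Import numFieldNormedType.Exports.
Local Open Scope classical_set_scope.
Local Open Scope ring_scope.

Definition stepZ (b : bool) : int := if b then 1 else -1.

(* walk_pos s j = S_(j+1) = X_1 + ... + X_j  (so S_1 = 0). *)
Definition walk_pos (n : nat) (s : {ffun 'I_n -> bool}) (j : nat) : int :=
  \sum_(i < n | (i < j)%N) stepZ (s i).

(* ell_n(f) = (1/n) sum_{j=1}^n f(S_j); only uses the first n-1 steps. *)
Definition ell (R : realType) (f : int -> R) (n : nat) (s : {ffun 'I_n -> bool}) : R :=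
  (n%:R)^-1 * \sum_(j < n) f (walk_pos s j).

Definition path_weight (R : realType) (p : R) (n : nat) (s : {ffun 'I_n -> bool}) : R :=
  \prod_(i < n) (if s i then p else 1 - p).

Definition ell_law (R : realType) (p : R) (f : int -> R) (n : nat) (A : set R) : R :=
  \sum_(s : {ffun 'I_n -> bool} | `[< A (ell f s) >]) path_weight p s.

Definition elog (R : realType) (x : R) : \bar R :=
  if x == 0 then -oo%E else (ln x)%:E.

Definition rate_seq (R : realType) (P : nat -> set R -> R) (A : set R) : nat -> \bar R :=
  fun n => (((n%:R : R)^-1)%:E * elog (P n A))%E.

Definition satisfies_LDP (R : realType) (P : nat -> set R -> R) : Prop :=
  exists J : R -> \bar R,
    (forall x, (0 <= J x)%E) /\ lower_semicontinuous J /\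
    (forall U : set R, open U ->
       (- ereal_inf (J @` U) <= limn_einf (rate_seq P U))%E) /\
    (forall F : set R, closed F ->
       (limn_esup (rate_seq P F) <= - ereal_inf (J @` F))%E).

From HB Require Import structures.
From mathcomp Require Import all_boot all_order all_algebra.
From mathcomp Require Import all_classical all_reals all_analysis.
From mathcomp Require Import zify ring lra.
Import Order.TTheory GRing.Theory Num.Theory.
Import numFieldNormedType.Exports.
Set Implicit Arguments. Unset Strict Implicit. Unset Printing Implicit Defensive.
Local Open Scope ring_scope.

(* For p > 1/2 a Chernoff bound gives K > 0 and rho < 1 with
   P(K S_j <= j) <= rho^j, so outside an event of probability O(rho^(n/4)) the
   walk satisfies j / K < S_j <= j at all times j >= n/4.  Let f be the
   indicator of the positive integers whose base-16K logarithm is even.  At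
   times n = (16K)^(e+1) the walk spends the last three quarters of [1, n] in
   the block [(16K)^e, (16K)^(e+1)), so l_n(f) >= 3/4 if e is even and
   l_n(f) <= 1/4 if e is odd, up to that small event.  Thus P(l_n >= 3/4) does
   not decay exponentially along even e, while P(l_n > 1/2) does along odd e;
   but an LDP gives limsup (1/n) log P(F) <= liminf (1/n) log P(U) for closed
   F included in open U.  The case p < 1/2 follows by mirroring the walk. *)

Section Walk.
Variable R : realType.
Implicit Types (p : R) (n j : nat).

Definition downs n (s : {ffun 'I_n -> bool}) j : nat :=
  (\sum_(i < n | (i < j)%N) ~~ s i)%N.

Lemma walk_posE n (s : {ffun 'I_n -> bool}) j : (j <= n)%N ->
  walk_pos s j = j%:Z - 2 * (downs s j)%:Z.
Proof.
move=> jn; rewrite /walk_pos /downs.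
have -> : \sum_(i < n | (i < j)%N) stepZ (s i) =
    \sum_(i < n | (i < j)%N) (1 - 2 * (~~ s i : nat)%:Z).
  by apply: eq_bigr => i _; case: (s i).
rewrite sumrB -mulr_sumr (big_morph Posz PoszD (erefl _)); congr (_ - _).
by rewrite -(big_ord_widen n (fun=> 1) jn) sumr_const card_ord -natz.
Qed.

Lemma walk_pos_le n (s : {ffun 'I_n -> bool}) j : (j <= n)%N -> walk_pos s j <= j%:Z.
Proof. by move=> jn; rewrite walk_posE //; lia. Qed.

Lemma path_weight_ge0 p n (s : {ffun 'I_n -> bool}) : 0 <= p <= 1 -> 0 <= path_weight p s.
Proof.
by case/andP=> p0 p1; apply: prodr_ge0 => i _; case: (s i); rewrite ?subr_ge0.
Qed.

Lemma sum_path_weight_prod p n (g : 'I_n -> bool -> R) :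
  \sum_(s : {ffun 'I_n -> bool}) path_weight p s * \prod_(i < n) g i (s i) =
  \prod_(i < n) (p * g i true + (1 - p) * g i false).
Proof.
under eq_bigr do rewrite -big_split /=.
rewrite -(bigA_distr_bigA (fun i b => (if b then p else 1 - p) * g i b)).
by apply: eq_bigr => i _; rewrite big_bool addrC.
Qed.

Lemma sum_path_weight p n : \sum_(s : {ffun 'I_n -> bool}) path_weight p s = 1.
Proof.
have /= := @sum_path_weight_prod p n (fun _ _ => 1).
under eq_bigr do rewrite big1_eq mulr1.
by rewrite !mulr1 subrKC big1_eq.
Qed.

Lemma sum_path_weight_expr_downs p n j (lam : R) : (j <= n)%N ->
  \sum_(s : {ffun 'I_n -> bool}) path_weight p s * lam ^+ downs s j =
  (p + (1 - p) * lam) ^+ j.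
Proof.
move=> jn.
transitivity (\sum_(s : {ffun 'I_n -> bool}) path_weight p s *
    \prod_(i < n) (if (i < j)%N then lam ^+ (~~ s i) else 1)).
  by apply: eq_bigr => s _; rewrite /downs -prodrXr big_mkcond.
have -> : (p + (1 - p) * lam) ^+ j = \prod_(i < n | (i < j)%N) (p + (1 - p) * lam).
  by rewrite -(big_ord_widen n (fun=> p + (1 - p) * lam) jn) prodr_const card_ord.
rewrite (sum_path_weight_prod p (fun i b => if (i < j)%N then lam ^+ (~~ b) else 1)).
rewrite [RHS]big_mkcond; apply: eq_bigr => i _ /=.
by case: ifP => _; rewrite ?expr0 ?expr1 !mulr1 // subrKC.
Qed.

(* [(t ^+ 2) ^+ K.+1 <= lam ^+ K] says [t <= lam ^ (K / (2 K + 2))], the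
   exponent matching the event [downs s j >= K j / (2 K + 2)]. *)
Lemma expr_le_downs (t lam : R) (K n j : nat) (s : {ffun 'I_n -> bool}) :
  0 < t -> 1 <= lam -> (t ^+ 2) ^+ K.+1 <= lam ^+ K -> (j <= n)%N ->
  K.+1%:Z * walk_pos s j <= j%:Z -> t ^+ j <= lam ^+ downs s j.
Proof.
move=> t0 lam1 tK jn slow.
have downs_ge : (K * j <= 2 * K.+1 * downs s j)%N by move: slow; rewrite walk_posE //; lia.
rewrite -(@ler_pXn2r _ (2 * K.+1)) ?nnegrE ?exprn_ge0 ?(ltW t0) ?(le_trans ler01 lam1) //.
have -> : (t ^+ j) ^+ (2 * K.+1) = ((t ^+ 2) ^+ K.+1) ^+ j.
  by rewrite -!exprM; congr (_ ^+ _); lia.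
apply: (le_trans (y := (lam ^+ K) ^+ j)).
  by rewrite lerXn2r // nnegrE !exprn_ge0 // ?(ltW t0) ?(le_trans ler01 lam1).
by rewrite -!exprM; apply: (ler_weXn2l lam1); lia.
Qed.

Lemma chernoff_walk p (t lam : R) (K n j : nat) :
  0 <= p <= 1 -> 0 < t -> 1 <= lam -> (t ^+ 2) ^+ K.+1 <= lam ^+ K -> (j <= n)%N ->
  \sum_(s : {ffun 'I_n -> bool} | K.+1%:Z * walk_pos s j <= j%:Z) path_weight p s
    <= ((p + (1 - p) * lam) / t) ^+ j.
Proof.
move=> p01 t0 lam1 tK jn.
rewrite expr_div_n -(sum_path_weight_expr_downs p lam jn) mulr_suml big_mkcond.
apply: ler_sum => s _; case: ifP => slow.
  rewrite -mulrA ler_peMr ?path_weight_ge0 // ler_pdivlMr ?exprn_gt0 // mul1r.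
  exact: (expr_le_downs t0 lam1 tK jn slow).
have lam0 : 0 <= lam by apply: le_trans lam1.
by rewrite divr_ge0 ?mulr_ge0 ?exprn_ge0 ?path_weight_ge0 ?(ltW t0).
Qed.

End Walk.

Section Drift.
Variable R : realType.

Lemma eventually_expr_lt (r eps : R) : 0 <= r < 1 -> 0 < eps ->
  exists N, forall n, (N <= n)%N -> r ^+ n < eps.
Proof.
move=> /andP[r0 r1] eps0.
have r_lt1 : `|r| < 1 by rewrite ger0_norm.
have [N _ HN] := cvgr0_norm_lt _ (cvg_expr r_lt1) _ eps0.
by exists N => n /HN; rewrite /= ger0_norm // exprn_ge0.
Qed.

Lemma sum_expr_tail_le (r : R) (a N : nat) : 0 < r < 1 ->
  \sum_(j < N | (a <= j)%N) r ^+ j <= r ^+ a / (1 - r).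
Proof.
move=> /andP[r0 r1].
have geom_le : \sum_(a <= j < a + N) r ^+ j <= r ^+ a / (1 - r).
  by rewrite geometric_partial_tail geometric_le_lim ?exprn_ge0 ?ger0_norm ?(ltW r0).
have -> : \sum_(j < N | (a <= j)%N) r ^+ j = \sum_(a <= j < N) r ^+ j.
  by rewrite big_geq_mkord.
case: (leqP a N) => aN; last first.
  by rewrite big_geq ?(ltnW aN) // divr_ge0 ?exprn_ge0 ?subr_ge0 ?(ltW r0) ?(ltW r1).
apply: le_trans geom_le; rewrite (big_cat_nat aN (leq_addl _ _)) /= lerDl.
by apply: sumr_ge0 => j _; rewrite exprn_ge0 ?(ltW r0).
Qed.

Lemma walk_drift_tail (p : R) : 2^-1 < p < 1 ->
  exists (rho : R) (K : nat), [/\ 0 < rho < 1, (0 < K)%N &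
    forall n j, (j <= n)%N ->
      \sum_(s : {ffun 'I_n -> bool} | K%:Z * walk_pos s j <= j%:Z) path_weight p s
        <= rho ^+ j].
Proof.
(* Chernoff bound for [downs] with [lam = p / (1 - p)], so that
   [p + (1 - p) lam = 2 p], and [4 p^2 < lam] because [4 p (1 - p) < 1]. *)
move=> /andP[ph p1].
have p0 : 0 < p by apply: lt_trans ph; rewrite invr_gt0.
have q0 : 0 < 1 - p by rewrite subr_gt0.
pose lam := p / (1 - p).
have lam1 : 1 <= lam by rewrite ler_pdivlMr // mul1r; lra.
have lam_gt : 4 * p ^+ 2 < lam.
  have gap : p - 4 * p ^+ 2 * (1 - p) = p * (2 * p - 1) ^+ 2 by ring.
  by rewrite ltr_pdivlMr // -subr_gt0 gap mulr_gt0 // exprn_gt0 //; lra.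
have p2 : 0 <= p ^+ 2 by exact: sqr_ge0.
pose T := (4 * p ^+ 2 + lam) / 2.
pose t := Num.sqrt T.
have T0 : 0 < T by rewrite /T; lra.
have tT : t ^+ 2 = T by rewrite sqr_sqrtr // ltW.
have t_gt : 2 * p < t.
  rewrite -(ltr_pXn2r (n := 2)) ?nnegrE ?mulr_ge0 ?sqrtr_ge0 ?(ltW p0) // tT.
  by rewrite exprMn /T; lra.
have t0 : 0 < t by apply: lt_trans t_gt; rewrite mulr_gt0.
have [N HN] : exists N, forall n, (N <= n)%N -> (T / lam) ^+ n < lam^-1.
  apply: eventually_expr_lt; last by rewrite invr_gt0; lra.
  by rewrite divr_ge0 ?(ltW T0) ?ltr_pdivrMr ?mul1r /T; lra.
have tK : (t ^+ 2) ^+ N.+1 <= lam ^+ N.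
  have := HN N.+1 (leqnSn N).
  rewrite expr_div_n ltr_pdivrMr ?exprn_gt0 //; last lra.
  by rewrite [lam ^+ N.+1]exprS mulKf ?gt_eqF ?tT; [move/ltW | lra | lra].
exists (2 * p / t), N.+1; split => //.
  by rewrite divr_gt0 ?mulr_gt0 // ltr_pdivrMr // mul1r.
move=> n j jn.
have -> : 2 * p = p + (1 - p) * lam by rewrite /lam mulrCA divff ?gt_eqF // mulr1; lra.
by apply: chernoff_walk => //; rewrite ?(ltW p0) ?(ltW p1).
Qed.

End Drift.

Section Occupation.
Variable R : realType.

Lemma sum_path_weight_exists_le (p : R) n (I : finType) (Q : pred I)
    (E : I -> pred {ffun 'I_n -> bool}) : 0 <= p <= 1 ->
  \sum_(s : {ffun 'I_n -> bool} | [exists i, Q i && E i s]) path_weight p s <=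
  \sum_(i | Q i) \sum_(s : {ffun 'I_n -> bool} | E i s) path_weight p s.
Proof.
move=> p01; under [X in _ <= X]eq_bigr do rewrite big_mkcond.
rewrite exchange_big /= big_mkcond; apply: ler_sum => s _.
have sum_ge0 (P : pred I) : 0 <= \sum_(i | P i) (if E i s then path_weight p s else 0).
  by apply: sumr_ge0 => i _; case: ifP => // _; exact: path_weight_ge0.
case: existsP => [[i /andP[Qi Eis]]|_]; last exact: sum_ge0.
by rewrite (bigD1 i) //= Eis lerDl sum_ge0.
Qed.

Lemma ell_law_le_sum (p : R) f n (A : set R) (B : pred {ffun 'I_n -> bool}) :
  0 <= p <= 1 -> (forall s, A (ell f s) -> B s) ->
  ell_law p f n A <= \sum_(s | B s) path_weight p s.
Proof.
move=> p01 AB; rewrite /ell_law big_mkcond [X in _ <= X]big_mkcond.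
apply: ler_sum => s _; case: asboolP => [/AB -> //|_].
by case: (B s); rewrite ?path_weight_ge0.
Qed.

Lemma ell_law_ge_sum (p : R) f n (A : set R) (B : pred {ffun 'I_n -> bool}) :
  0 <= p <= 1 -> (forall s, ~~ B s -> A (ell f s)) ->
  1 - \sum_(s | B s) path_weight p s <= ell_law p f n A.
Proof.
move=> p01 BA.
apply: (le_trans (y := \sum_(s | ~~ B s) path_weight p s)).
  by rewrite -(sum_path_weight p n) (bigID B) /=; lra.
rewrite /ell_law big_mkcond [X in _ <= X]big_mkcond.
apply: ler_sum => s _; case: ifP => [/BA As|_]; first by rewrite asboolT.
by case: asboolP; rewrite ?path_weight_ge0.
Qed.

Lemma ell_dist_le (f : int -> R) (c : R) n J0 (s : {ffun 'I_n -> bool}) :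
  (0 < J0)%N -> (4 * J0 = n)%N -> (forall z, `|f z - c| <= 1) ->
  (forall j : 'I_n, (J0 <= j)%N -> f (walk_pos s j) = c) ->
  `|ell f s - c| <= 4^-1.
Proof.
move=> J0_gt0 nE fc late.
have n0 : 0 < n%:R :> R by rewrite ltr0n; lia.
have -> : ell f s - c = n%:R^-1 * \sum_(j < n) (f (walk_pos s j) - c).
  rewrite /ell sumrB sumr_const card_ord -(mulr_natl c) mulrBr mulrA.
  by rewrite mulVf ?mul1r // gt_eqF.
have early : `|\sum_(j < n) (f (walk_pos s j) - c)| <= J0%:R.
  apply: le_trans (ler_norm_sum _ _ _) _.
  rewrite -[J0]card_ord -sumr_const (big_ord_widen n (fun=> 1)) ?[leRHS]big_mkcond; last lia.
  apply: ler_sum => j _; case: ltnP => [//|/late ->].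
  by rewrite subrr normr0.
have nR : n%:R = 4 * J0%:R :> R by rewrite -nE natrM.
rewrite normrM ger0_norm ?invr_ge0 ?(ltW n0) // nR invfM -mulrA.
by rewrite ler_piMr ?invr_ge0 // mulrC ler_pdivrMr ?ltr0n // mul1r.
Qed.

End Occupation.

Section LDP.
Variable R : realType.
Implicit Types (P : nat -> set R -> R) (F U : set R).

Lemma ldp_rate_closed_le_open P F U : satisfies_LDP P ->
  closed F -> open U -> (F `<=` U)%classic ->
  (limn_esup (rate_seq P F) <= limn_einf (rate_seq P U))%E.
Proof.
move=> [J [_ [_ [lower upper]]]] cF oU FU.
apply: le_trans (upper F cF) _; apply: le_trans (lower U oU).
by rewrite leeN2; apply/ereal_inf_le_tmp/image_subset.
Qed.

Lemma not_ldp_of_rate_gap P F U (a b : R) :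
  closed F -> open U -> (F `<=` U)%classic -> b < a ->
  (forall N, exists2 n, (N <= n)%N & (a%:E <= rate_seq P F n)%E) ->
  (forall N, exists2 n, (N <= n)%N & (rate_seq P U n <= b%:E)%E) ->
  ~ satisfies_LDP P.
Proof.
move=> cF oU FU ba oftenF oftenU /ldp_rate_closed_le_open /(_ cF oU FU).
have a_le : (a%:E <= limn_esup (rate_seq P F))%E.
  rewrite limn_esup_lim; apply: lime_ge; first exact: is_cvg_esups.
  apply: nearW => N; have [n Nn Fn] := oftenF N.
  by apply: le_trans Fn _; apply: ereal_sup_ubound; exists n.
have le_b : (limn_einf (rate_seq P U) <= b%:E)%E.
  rewrite limn_einf_lim; apply: lime_le; first exact: is_cvg_einfs.
  apply: nearW => N; have [n Nn Un] := oftenU N.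
  by apply: le_trans Un; apply: ereal_inf_lbound; exists n.
by move/(le_trans a_le)/le_trans/(_ le_b); rewrite lee_fin leNgt ba.
Qed.

Lemma rate_seq_ge_ln P (A : set R) (rho : R) (c k : nat) :
  0 < rho -> (0 < c * k)%N -> rho ^+ k <= P (c * k)%N A ->
  ((ln rho / c%:R)%:E <= rate_seq P A (c * k))%E.
Proof.
move=> rho0 ck0 rhoP.
have P0 : 0 < P (c * k)%N A by apply: lt_le_trans rhoP; rewrite exprn_gt0.
have c0 : c%:R != 0 :> R by rewrite pnatr_eq0; lia.
have k0 : k%:R != 0 :> R by rewrite pnatr_eq0; lia.
rewrite /rate_seq /elog gt_eqF // -EFinM lee_fin.
have -> : ln rho / c%:R = (c * k)%:R^-1 * ln (rho ^+ k).
  by rewrite lnXn // -mulr_natr natrM; field; rewrite c0 k0.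
by rewrite ler_wpM2l ?invr_ge0 // ler_ln // posrE exprn_gt0.
Qed.

Lemma rate_seq_le_ln P (A : set R) (rho : R) (c k : nat) :
  0 < rho -> (0 < c * k)%N -> 0 <= P (c * k)%N A -> P (c * k)%N A <= rho ^+ k ->
  (rate_seq P A (c * k) <= (ln rho / c%:R)%:E)%E.
Proof.
move=> rho0 ck0 P0 Prho.
have c0 : c%:R != 0 :> R by rewrite pnatr_eq0; lia.
have k0 : k%:R != 0 :> R by rewrite pnatr_eq0; lia.
rewrite /rate_seq /elog; case: eqP => [_|/eqP Pn0].
  by rewrite mulrNy gtr0_sg ?invr_gt0 ?ltr0n // mul1e leNye.
rewrite -EFinM lee_fin.
have -> : ln rho / c%:R = (c * k)%:R^-1 * ln (rho ^+ k).
  by rewrite lnXn // -mulr_natr natrM; field; rewrite c0 k0.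
by rewrite ler_wpM2l ?invr_ge0 // ler_ln // posrE ?exprn_gt0 // lt0r Pn0.
Qed.

End LDP.

Section EvenBlocks.
Variable R : realType.
Variables (p rho : R) (K : nat).
Hypotheses (p01 : 0 <= p <= 1) (rho01 : 0 < rho < 1) (K_gt0 : (0 < K)%N).
Hypothesis drift : forall n j, (j <= n)%N ->
  \sum_(s : {ffun 'I_n -> bool} | K%:Z * walk_pos s j <= j%:Z) path_weight p s
    <= rho ^+ j.

Definition base := (16 * K)%N.

Definition even_block (z : int) : R :=
  if (0 < z) && ~~ odd (trunc_log base `|z|%N) then 1 else 0.

Definition scale e := (K * base ^ e)%N.

Definition lagging n J0 (s : {ffun 'I_n -> bool}) :=
  [exists j : 'I_n, (J0 <= j)%N && (K%:Z * walk_pos s j <= j%:Z)].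

Lemma base_gt1 : (1 < base)%N.
Proof. by rewrite /base; lia. Qed.

Lemma scale_gt e : (e < scale e)%N.
Proof. by apply: leq_trans (ltn_expl e base_gt1) _; rewrite leq_pmull. Qed.

Lemma prob_lagging n J0 :
  \sum_(s : {ffun 'I_n -> bool} | lagging J0 s) path_weight p s <= rho ^+ J0 / (1 - rho).
Proof.
apply: le_trans (sum_path_weight_exists_le (fun j : 'I_n => (J0 <= j)%N)
  (fun j s => K%:Z * walk_pos s j <= j%:Z) p01) _.
apply: le_trans (sum_expr_tail_le _ _ rho01).
by apply: ler_sum => j _; apply/drift/ltnW.
Qed.

(* Time horizon [16 * scale e = base ^ e.+1]: from time [4 * scale e] on, a
   walk that is not lagging stays in the block [[base ^ e, base ^ e.+1)]. *)
Lemma even_block_walk e (s : {ffun 'I_(16 * scale e) -> bool}) :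
  ~~ lagging (4 * scale e) s ->
  forall j : 'I_(16 * scale e), (4 * scale e <= j)%N ->
  even_block (walk_pos s j) = (~~ odd e)%:R.
Proof.
move=> not_lag j late.
have ahead : j%:Z < K%:Z * walk_pos s j.
  rewrite ltNge; apply: contra not_lag => lag.
  by apply/existsP; exists j; rewrite late lag.
have behind := walk_pos_le s (ltnW (ltn_ord j)).
case: (walk_pos s j) ahead behind => [z|z] ahead behind; last first.
  by move: ahead; rewrite NegzE; nia.
have z_lo : (base ^ e <= z)%N.
  suff : (K * (4 * base ^ e) < K * z)%N by rewrite ltn_pmul2l //; lia.
  by move: ahead; rewrite -PoszM ltz_nat mulnCA; apply: leq_ltn_trans.
have z_hi : (z < base ^ e.+1)%N.
  move: behind; rewrite lez_nat => /leq_ltn_trans; apply.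
  by rewrite expnS /scale -mulnA; exact: ltn_ord j.
rewrite /even_block /= (@trunc_log_eq base e z base_gt1) ?z_lo ?z_hi //.
have z_pos : 0 < z%:Z.
  have : (0 < base ^ e)%N by rewrite expn_gt0 (ltnW base_gt1).
  lia.
by rewrite z_pos; case: (odd e).
Qed.

Lemma ell_even_block_dist e (s : {ffun 'I_(16 * scale e) -> bool}) :
  ~~ lagging (4 * scale e) s -> `|ell even_block s - (~~ odd e)%:R| <= 4^-1.
Proof.
move=> not_lag; apply: (ell_dist_le (J0 := 4 * scale e)).
- by rewrite !muln_gt0 K_gt0 expn_gt0 (ltnW base_gt1).
- by rewrite mulnA.
- by move=> z; rewrite /even_block; case: ifP => _; case: (odd e);
    rewrite /= ?subrr ?subr0 ?sub0r ?normrN ?normr0 ?normr1.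
- exact: even_block_walk.
Qed.

Lemma ell_law_even_scale e : ~~ odd e ->
  1 - rho ^+ (4 * scale e) / (1 - rho) <=
  ell_law p even_block (16 * scale e) [set x | 3 / 4 <= x].
Proof.
move=> even_e.
apply: le_trans _ (ell_law_ge_sum (B := lagging (4 * scale e)) p01 _).
  by rewrite lerD2l lerN2 prob_lagging.
move=> s /ell_even_block_dist; rewrite even_e /=.
by move/ler_distlCBl; lra.
Qed.

Lemma ell_law_odd_scale e : odd e ->
  ell_law p even_block (16 * scale e) [set x | 1 / 2 < x] <=
  rho ^+ (4 * scale e) / (1 - rho).
Proof.
move=> odd_e; apply: le_trans (prob_lagging _ _).
apply: ell_law_le_sum => // s /= half; apply: contraT => /ell_even_block_dist.
by rewrite odd_e subr0 => /ler_normlW; lra.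
Qed.

Lemma not_ldp_ell_even_block : ~ satisfies_LDP (ell_law p even_block).
Proof.
case/andP: rho01 => rho0 rho1.
have rho_lt : 0 < 1 - rho by rewrite subr_gt0.
have [M small] : exists M, forall k, (M <= k)%N -> rho ^+ k < (1 - rho) / 2.
  by apply: eventually_expr_lt; rewrite ?divr_gt0 ?(ltW rho0).
have ln_rho : ln rho < 0 by rewrite ln_lt0 // rho0.
have pow_double_le k : rho ^+ (2 * k) <= rho ^+ k.
  by apply: ler_wiXn2l; rewrite ?(ltW rho0) ?(ltW rho1); lia.
have tail_le k : (M <= k)%N -> rho ^+ (4 * k) / (1 - rho) <= rho ^+ (2 * k).
  move=> /small rho_k; have := pow_double_le k.
  have -> : (4 * k = 2 * k + 2 * k)%N by lia.
  rewrite exprD ler_pdivrMr // ler_pM2l ?exprn_gt0 //; lra.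
apply: (not_ldp_of_rate_gap (F := [set x | 3 / 4 <= x]) (U := [set x | 1 / 2 < x])
  (a := ln rho / 16%:R) (b := ln rho / 8%:R)).
- exact: closed_ge.
- exact: open_gt.
- by move=> x /=; lra.
- lra.
- move=> N; pose e := (2 * maxn N M)%N.
  have Me : (M <= scale e)%N by apply/ltnW/(leq_trans _ (scale_gt e)); rewrite /e; lia.
  exists (16 * scale e)%N; first by have := scale_gt e; rewrite /e; lia.
  apply: rate_seq_ge_ln => //; first by have := scale_gt e; lia.
  apply: le_trans (ell_law_even_scale _); last by rewrite /e oddM.
  have := tail_le _ Me; have := pow_double_le (scale e); have := small _ Me; lra.
- move=> N; pose e := (2 * maxn N M).+1.
  have Me : (M <= scale e)%N by apply/ltnW/(leq_trans _ (scale_gt e)); rewrite /e; lia.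
  exists (8 * (2 * scale e))%N; first by have := scale_gt e; rewrite /e; lia.
  apply: rate_seq_le_ln => //.
  + by have := scale_gt e; lia.
  + by apply: sumr_ge0 => s _; exact: path_weight_ge0.
  + rewrite [(8 * _)%N]mulnA; apply: le_trans (ell_law_odd_scale _) (tail_le _ Me).
    by rewrite /e /= oddM.
Qed.

End EvenBlocks.

Section Mirror.
Variable R : realType.

Definition mirror n (s : {ffun 'I_n -> bool}) : {ffun 'I_n -> bool} := [ffun i => ~~ s i].

Lemma mirrorK n : involutive (@mirror n).
Proof. by move=> s; apply/ffunP => i; rewrite !ffunE negbK. Qed.

Lemma walk_pos_mirror n (s : {ffun 'I_n -> bool}) j :
  walk_pos (mirror s) j = - walk_pos s j.
Proof. by rewrite /walk_pos -sumrN; apply: eq_bigr => i _; rewrite ffunE; case: (s i). Qed.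

Lemma path_weight_mirror (p : R) n (s : {ffun 'I_n -> bool}) :
  path_weight p (mirror s) = path_weight (1 - p) s.
Proof. by apply: eq_bigr => i _; rewrite ffunE; case: (s i); rewrite /= ?opprB ?subrKC. Qed.

Lemma ell_law_mirror (p : R) (f : int -> R) n (A : set R) :
  ell_law p (fun z => f (- z)) n A = ell_law (1 - p) f n A.
Proof.
rewrite /ell_law (reindex_inj (inv_inj (@mirrorK n))) /=.
apply: eq_big => [s|s _]; last exact: path_weight_mirror.
congr (asbool (A _)); rewrite /ell; congr (_ * _).
by apply: eq_bigr => j _; rewrite walk_pos_mirror opprK.
Qed.

End Mirror.

Lemma not_ldp_gt_half (R : realType) (p : R) : 2^-1 < p < 1 ->
  exists f : int -> R,
    (exists M : R, forall z, `|f z| <= M) /\ ~ satisfies_LDP (ell_law p f).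
Proof.
move=> p_range; have [rho [K [rho01 K_gt0 drift]]] := walk_drift_tail p_range.
have p01 : 0 <= p <= 1 by case/andP: p_range => *; apply/andP; split; lra.
exists (even_block R K); split; last exact: not_ldp_ell_even_block p01 rho01 K_gt0 drift.
by exists 1 => z; rewrite /even_block; case: ifP; rewrite ?normr0 ?normr1.
Qed.

Theorem proposition1p3 (R : realType) (p : R) :
  0 < p < 1 -> p != 2^-1 ->
  exists f : int -> R,
    (exists M : R, forall z, `|f z| <= M) /\
    ~ satisfies_LDP (ell_law p f).
Proof.
move=> /andP[p0 p1]; case/lt_total/orP => [p_lt|p_gt]; last first.
  by apply: not_ldp_gt_half; rewrite p_gt.
have [f [[M f_le] not_ldp]] : exists f : int -> R, (exists M : R, forall z, `|f z| <= M) /\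
    ~ satisfies_LDP (ell_law (1 - p) f).
  by apply: not_ldp_gt_half; apply/andP; split; lra.
exists (fun z => f (- z)); split; first by exists M.
by rewrite (funext (fun n => funext (ell_law_mirror p f n))).
Qed.
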